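(* Consider the general binary observation model: a signal $X\in[0,1]^N$ is drawn from a known prior supported on $[\tau_0,\tau_1]^N$ where $0<\tau_0\le\tau_1<1$; conditionally on $X$, the observations $Y_1,\dots,Y_N\in\{0,1\}$ are independent with $\mathbb{E}[Y_i\mid X]=X_i$; and $x\in\mathbb{R}$ is a (square-integrable) scalar function of $X$ to be estimated. Then for every integer $D\ge0$, \[ \mathrm{Corr}_{\le D}^2 \le \sum_{\alpha\in\{0,1\}^N,\ 0\le|\alpha|\le D} \frac{\kappa_\alpha^2}{(\tau_0(1-\tau_1))^{|\alpha|}}, \] where $\kappa_\alpha$ for $\alpha\in\{0,1\}^N$ is defined recursively by $\kappa_\alpha = \mathbb{E}[xX^\alpha] - \sum_{0\le\beta\lneq\alpha}\kappa_\beta\,\mathbb{E}[X^{\alpha-\beta}]$.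
   Context: For $\alpha\in\{0,1\}^N$: $|\alpha|=\sum_i\alpha_i$, $X^\alpha=\prod_i X_i^{\alpha_i}$; $\beta\le\alpha$ is entrywise; $\beta\lneq\alpha$ means $\beta\le\alpha$, $\beta\ne\alpha$. The degree-$D$ maximum correlation is $\mathrm{Corr}_{\le D} = \sup\{\mathbb{E}[f(Y)x]/\sqrt{\mathbb{E}[f(Y)^2]} : f\in\mathbb{R}[Y]_{\le D},\ \mathbb{E}[f(Y)^2]\ne0\}$, where $\mathbb{R}[Y]_{\le D}$ denotes real polynomials of degree at most $D$ in the coordinates of $Y$, expectations under the joint law of $(x,Y)$. *)

From HB Require Import structures.
From mathcomp Require Import all_boot all_order all_algebra.
From mathcomp Require Import all_classical all_reals all_analysis.
From mathcomp Require mpoly.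
Set Implicit Arguments. Unset Strict Implicit. Unset Printing Implicit Defensive.
Import Order.TTheory GRing.Theory Num.Theory.
Local Open Scope ring_scope.
Local Open Scope classical_set_scope.

Definition bern_weight (R : realType) (N : nat) (v : 'I_N -> R)
    (y : {ffun 'I_N -> bool}) : R :=
  \prod_i (if y i then v i else 1 - v i).

(* Expectation under the joint law of (omega, Y): omega ~ P, and conditionally
   on omega the Y_i are independent Bernoulli(X_i omega). *)
Definition jointE (d : measure_display) (T : measurableType d) (R : realType)
    (P : probability T R) (N : nat) (X : 'I_N -> T -> R)
    (h : T -> {ffun 'I_N -> bool} -> R) : R :=
  Rintegral P setT
    (fun w => \sum_(y : {ffun 'I_N -> bool}) h w y * bern_weight (fun i => X i w) y).

Definition evalY (R : realType) (N : nat) (f : mpoly.mpoly N R)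
    (y : {ffun 'I_N -> bool}) : R :=
  mpoly.meval (fun i => (y i)%:R) f.

Definition deg_le (R : realType) (N : nat) (f : mpoly.mpoly N R) (D : nat) : bool :=
  all (fun m => (mpoly.mdeg m <= D)%N) (mpoly.msupp f).

Definition Corr_le (d : measure_display) (T : measurableType d) (R : realType)
    (P : probability T R) (N : nat) (X : 'I_N -> T -> R) (x : T -> R)
    (D : nat) : R :=
  sup [set r : R | exists f : mpoly.mpoly N R,
        [/\ deg_le f D,
            jointE P X (fun _ y => evalY f y ^+ 2) != 0 &
            r = jointE P X (fun w y => evalY f y * x w)
                / Num.sqrt (jointE P X (fun _ y => evalY f y ^+ 2))]].

(* X^alpha for alpha encoded as a subset A of 'I_N *)
Definition Xpow (T : Type) (R : realType) (N : nat) (X : 'I_N -> T -> R)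
    (A : {set 'I_N}) (w : T) : R := \prod_(i in A) X i w.

(* kappa_alpha, defined by the recursion
   kappa_A = E[x X^A] - sum_{B proper subset of A} kappa_B E[X^(A\B)],
   computed with fuel (fuel >= #|A| suffices since #|B| < #|A|). *)
Fixpoint kappa_fuel (d : measure_display) (T : measurableType d) (R : realType)
    (P : probability T R) (N : nat) (X : 'I_N -> T -> R) (x : T -> R)
    (n : nat) (A : {set 'I_N}) : R :=
  match n with
  | 0 => Rintegral P setT (fun w => x w * Xpow X A w)
  | n'.+1 => Rintegral P setT (fun w => x w * Xpow X A w)
      - \sum_(B : {set 'I_N} | B \proper A)
          kappa_fuel P X x n' B * Rintegral P setT (Xpow X (A :\: B))
  end.

Definition kappa (d : measure_display) (T : measurableType d) (R : realType)
    (P : probability T R) (N : nat) (X : 'I_N -> T -> R) (x : T -> R)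
    (A : {set 'I_N}) : R :=
  kappa_fuel P X x #|A| A.

From HB Require Import structures.
From mathcomp Require Import all_boot all_order all_algebra.
From mathcomp Require Import all_classical all_reals all_analysis.
From mathcomp Require mpoly.
From mathcomp Require Import measurable_realfun ring lra.
Set Implicit Arguments. Unset Strict Implicit. Unset Printing Implicit Defensive.
Import Order.TTheory GRing.Theory Num.Theory.
Local Open Scope ring_scope.
Local Open Scope classical_set_scope.

(* Let f have degree <= D.  On {0,1}^N it agrees with a multilinear polynomial
   F(y) = sum_A c_A y^A with c_A = 0 for |A| > D.  Given X = v the Y_i are
   independent Bernoulli(v_i); re-centring y^A = sum_{J <= A} (y - v)^J v^(A\J)
   gives F = sum_J g_J(v) (y - v)^J with g_J(v) = sum_{A >= J} c_A v^(A\J), and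
   the centred monomials (y - v)^J are orthogonal with squared norms
   prod_{i in J} v_i (1 - v_i).  Hence
     E[F^2]  = E[ sum_J g_J(X)^2 prod_{i in J} X_i (1 - X_i) ],
     E[F x]  = sum_A c_A E[x X^A] = E[Z],   Z := sum_B kappa_B g_B(X),
   the last step being the recursion that defines kappa.  Jensen gives
   E[F x]^2 <= E[Z^2], and a pointwise weighted Cauchy-Schwarz inequality with
   weights (tau0 (1 - tau1))^|B| <= prod_{i in B} X_i (1 - X_i) bounds Z^2 by
   S * E[F^2 | X], where S is the right-hand side of the theorem.  So every
   correlation ratio has square at most S, and so does their supremum. *)

Section BernoulliMoments.
Variables (R : realType) (N : nat).
Implicit Types (v : 'I_N -> R) (y : {ffun 'I_N -> bool}) (A B C J : {set 'I_N}).

Definition mono A y : R := \prod_(i in A) (y i)%:R.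
Definition vpow A v : R := \prod_(i in A) v i.
Definition ctr B v y : R := \prod_(i in B) ((y i)%:R - v i).

(* The coefficient of (y - v)^J when sum_A c_A y^A is re-expanded around v. *)
Definition recentred (c : {set 'I_N} -> R) J v : R :=
  \sum_(A : {set 'I_N} | J \subset A) c A * vpow (A :\: J) v.

Lemma bern_prod v (h : 'I_N -> bool -> R) :
  \sum_(y : {ffun 'I_N -> bool}) bern_weight v y * \prod_i h i (y i) =
  \prod_i (v i * h i true + (1 - v i) * h i false).
Proof.
transitivity (\sum_(y : {ffun 'I_N -> bool})
    \prod_i ((if y i then v i else 1 - v i) * h i (y i))).
  by apply: eq_bigr => y _; rewrite big_split.
pose F i (b : bool) := (if b then v i else 1 - v i) * h i b.
rewrite -(bigA_distr_bigA F).
by apply: eq_bigr => i _; rewrite big_bool.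
Qed.

Lemma cond_mono A v :
  \sum_(y : {ffun 'I_N -> bool}) bern_weight v y * mono A y = vpow A v.
Proof.
under eq_bigr do rewrite /mono big_mkcond.
rewrite (bern_prod v (fun i b => if i \in A then b%:R else 1)) /vpow [RHS]big_mkcond.
by apply: eq_bigr => i _; case: (i \in A) => /=; ring.
Qed.

Lemma cond_ctr2 B C v :
  \sum_(y : {ffun 'I_N -> bool}) bern_weight v y * (ctr B v y * ctr C v y) =
  if B == C then \prod_(i in B) (v i * (1 - v i)) else 0.
Proof.
pose h i (b : bool) := (if i \in B then b%:R - v i else 1) *
                       (if i \in C then b%:R - v i else 1).
have hE y : ctr B v y * ctr C v y = \prod_i h i (y i).
  by rewrite /ctr (big_mkcond (fun i => i \in B))
    (big_mkcond (fun i => i \in C)) -big_split.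
rewrite (eq_bigr _ (fun y _ => congr1 (GRing.mul _) (hE y))) bern_prod /h.
have [<-|neBC] := eqVneq B C.
  by rewrite [RHS]big_mkcond; apply: eq_bigr => i _; case: (i \in B) => /=; ring.
have [i Bi_Ci] : exists i, (i \in B) != (i \in C).
  apply/existsP; apply: contraNT neBC => /existsPn same.
  by apply/eqP/setP => i; move: (same i); case: (i \in B); case: (i \in C).
rewrite (bigD1 i) //=; move: Bi_Ci.
by case: (i \in B); case: (i \in C) => //= _; ring.
Qed.

Lemma expand_mono A v y :
  mono A y = \sum_(J : {set 'I_N} | J \subset A) ctr J v y * vpow (A :\: J) v.
Proof.
pose F i := if i \in A then (y i)%:R - v i else 0.
pose G i := if i \in A then v i else 1.
have -> : mono A y = \prod_i (F i + G i).
  rewrite /mono big_mkcond; apply: eq_bigr => i _; rewrite /F /G.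
  by case: (i \in A) => //=; ring.
rewrite bigA_distr [RHS]big_mkcond; apply: eq_big => [J|J _].
  by rewrite ?inE.
have [sJA|] := boolP (J \subset A).
  rewrite /ctr /vpow (big_mkcond (fun i => i \in J))
    (big_mkcond (fun i => i \in A :\: J)) -big_split /=.
  apply: eq_bigr => i _; rewrite !inE /F /G; have := fintype.subsetP sJA i.
  by case: (i \in J) => [/(_ isT) ->|_] /=; case: (i \in A); rewrite ?mulr1 ?mul1r.
case/fintype.subsetPn => i iJ niA.
by rewrite (bigD1 i) //= iJ /F (negbTE niA) mul0r.
Qed.

Lemma recentre (c : {set 'I_N} -> R) v y :
  \sum_(A : {set 'I_N}) c A * mono A y =
  \sum_(J : {set 'I_N}) recentred c J v * ctr J v y.
Proof.
under eq_bigr do rewrite (expand_mono _ v) mulr_sumr.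
rewrite (exchange_big_dep xpredT) //=; apply: eq_bigr => J _.
rewrite /recentred mulr_suml; apply: eq_big => // A _; ring.
Qed.

Lemma cond_multilin (c : {set 'I_N} -> R) v :
  \sum_(y : {ffun 'I_N -> bool})
     bern_weight v y * (\sum_(A : {set 'I_N}) c A * mono A y) =
  \sum_(A : {set 'I_N}) c A * vpow A v.
Proof.
under eq_bigr do rewrite mulr_sumr.
rewrite exchange_big; apply: eq_bigr => A _.
rewrite -cond_mono mulr_sumr; apply: eq_bigr => y _; ring.
Qed.

(* Conditional second moment of a multilinear polynomial (Parseval in the
   centred basis). *)
Lemma cond_multilin2 (c : {set 'I_N} -> R) v :
  \sum_(y : {ffun 'I_N -> bool})
     bern_weight v y * (\sum_(A : {set 'I_N}) c A * mono A y) ^+ 2 =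
  \sum_(J : {set 'I_N}) recentred c J v ^+ 2 * \prod_(i in J) (v i * (1 - v i)).
Proof.
have E y : bern_weight v y * (\sum_(A : {set 'I_N}) c A * mono A y) ^+ 2 =
   \sum_(J : {set 'I_N}) \sum_(K : {set 'I_N}) (recentred c J v * recentred c K v) *
      (bern_weight v y * (ctr J v y * ctr K v y)).
  rewrite (recentre c v) expr2 big_distrlr mulr_sumr; apply: eq_bigr => J _.
  by rewrite mulr_sumr; apply: eq_bigr => K _ /=; ring.
rewrite (eq_bigr _ (fun y _ => E y)) exchange_big; apply: eq_bigr => J _.
rewrite exchange_big /=.
under eq_bigr do rewrite -mulr_sumr cond_ctr2.
rewrite (bigD1 J) //= eqxx [X in _ + X]big1 ?addr0; first by rewrite expr2.
by move=> K; rewrite eq_sym => /negbTE ->; rewrite mulr0.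
Qed.

End BernoulliMoments.
Arguments mono {R N}.

Section MultilinearForm.
Local Close Scope classical_set_scope.
Local Coercion mpoly.fun_of_multinom : mpoly.multinom >-> Funclass.
Variables (R : realType) (N : nat).

(* On {0,1}^N the monomial Y^m only depends on the support of m, so a
   polynomial f agrees there with the multilinear sum_A multilin_coef f A * y^A. *)
Definition multilin_coef (f : mpoly.mpoly N R) (A : {set 'I_N}) : R :=
  \sum_(m <- mpoly.msupp f | [set i | m i != 0%N] == A) mpoly.mcoeff m f.

Lemma evalY_multilin f (y : {ffun 'I_N -> bool}) :
  evalY f y = \sum_(A : {set 'I_N}) multilin_coef f A * mono A y.
Proof.
rewrite /evalY mpoly.mevalE.
under [RHS]eq_bigr do rewrite /multilin_coef mulr_suml big_mkcond.
rewrite [RHS]exchange_big /=; apply: eq_bigr => m _.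
rewrite -big_mkcond /= (eq_bigl (fun A => A == [set i | m i != 0%N])); last first.
  by move=> A; rewrite eq_sym.
rewrite big_pred1_eq; congr (_ * _).
rewrite /mono [RHS]big_mkcond; apply: eq_bigr => i _; rewrite inE.
by case: (m i) => [|k] //=; case: (y i) => /=; rewrite ?expr1n ?expr0n.
Qed.

Lemma card_supp_le (m : mpoly.multinom N) :
  (#|[set i | m i != 0%N]| <= mpoly.mdeg m)%N.
Proof.
rewrite mpoly.mdegE -sum1_card.
apply: (@leq_trans (\sum_(i in [set i | m i != 0%N]) m i)%N).
  by apply: leq_sum => i; rewrite inE lt0n.
by rewrite [X in (_ <= X)%N](bigID (mem [set i | m i != 0%N])) leq_addr.
Qed.

Lemma multilin_coef_deg f D (A : {set 'I_N}) :
  deg_le f D -> (D < #|A|)%N -> multilin_coef f A = 0.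
Proof.
rewrite /deg_le /multilin_coef => + ltDA; elim: (mpoly.msupp f) => [|m s IH] /=.
  by rewrite big_nil.
case/andP => degm degs; rewrite big_cons IH //.
case: ifP => // /eqP suppm.
by have := leq_trans (card_supp_le m) degm; rewrite suppm leqNgt ltDA.
Qed.

End MultilinearForm.

Section WeightedCauchySchwarz.
Variable R : realFieldType.

Lemma weighted_cauchy_schwarz (I : finType) (P : pred I) (p q w : I -> R) :
  (forall i, P i -> 0 < w i) ->
  (\sum_(i | P i) p i * q i) ^+ 2 <=
  (\sum_(i | P i) p i ^+ 2 / w i) * (\sum_(i | P i) w i * q i ^+ 2).
Proof.
move=> w_gt0; have w_neq0 i : P i -> w i != 0 by move/w_gt0; rewrite lt0r => /andP[].
set a := \sum_(i | P i) p i ^+ 2 / w i.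
set b := \sum_(i | P i) w i * q i ^+ 2.
set c := \sum_(i | P i) p i * q i.
have pw_ge0 i : P i -> 0 <= p i ^+ 2 / w i.
  by move/w_gt0 => wi; rewrite divr_ge0 ?sqr_ge0 ?ltW.
(* the discriminant identity: 0 <= sum_i w_i (a q_i - c p_i / w_i)^2 = a (a b - c^2) *)
have disc : 0 <= a * (a * b - c ^+ 2).
  have -> : a * (a * b - c ^+ 2) =
            \sum_(i | P i) w i * (a * q i - c * p i / w i) ^+ 2.
    rewrite [RHS](eq_bigr (fun i => a ^+ 2 * (w i * q i ^+ 2) +
        - (2 * a * c) * (p i * q i) + c ^+ 2 * (p i ^+ 2 / w i))); last first.
      by move=> i Pi; field; exact: w_neq0.
    by rewrite !big_split /= -!mulr_sumr -/a -/b -/c; ring.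
  by apply: sumr_ge0 => i /w_gt0 wi; rewrite mulr_ge0 ?sqr_ge0 ?ltW.
have [a0|a_neq0] := eqVneq a 0; last first.
  have a_gt0 : 0 < a by rewrite lt0r a_neq0 sumr_ge0.
  by rewrite -subr_ge0 -(pmulr_rge0 _ a_gt0).
have p0 i : P i -> p i = 0.
  move=> Pi; have /eqP := psumr_eq0P pw_ge0 a0 Pi.
  by rewrite mulf_eq0 invr_eq0 sqrf_eq0 (negbTE (w_neq0 i Pi)) orbF => /eqP.
by rewrite /c big1 ?a0 ?expr0n ?mul0r // => i Pi; rewrite p0 ?mul0r.
Qed.

End WeightedCauchySchwarz.

Section ProbabilityIntegrals.
Variables (d : measure_display) (T : measurableType d) (R : realType)
  (P : probability T R).
Notation Rint f := (Rintegral P setT f).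

Definition Pintegrable (h : T -> R) := P.-integrable setT (EFin \o h).
Definition bounded_meas (h : T -> R) :=
  measurable_fun setT h /\ exists M : R, {ae P, forall w, `|h w| <= M}.

Lemma Rintegral_cstP (c : R) : Rint (fun _ => c) = c.
Proof.
have P1 : fine (P setT) = 1 :> R by rewrite probability_setT.
by rewrite Rintegral_cst // P1 mulr1.
Qed.

Lemma Pintegrable_cst (c : R) : Pintegrable (fun _ => c).
Proof. exact: finite_measure_integrable_cst. Qed.

Lemma PintegrableD (f g : T -> R) :
  Pintegrable f -> Pintegrable g -> Pintegrable (fun w => f w + g w).
Proof.
move=> hf hg; have := integrableD measurableT hf hg.
by apply: eq_integrable => // w _ /=; rewrite EFinD.
Qed.

Lemma PintegrableZ (a : R) (f : T -> R) :
  Pintegrable f -> Pintegrable (fun w => a * f w).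
Proof.
move=> hf; have := integrableZl measurableT a hf.
by apply: eq_integrable => // w _ /=; rewrite EFinM.
Qed.

Lemma Pintegrable_sum (I : Type) (r : seq I) (Pr : pred I) (h : I -> T -> R) :
  (forall i, Pr i -> Pintegrable (h i)) ->
  Pintegrable (fun w => \sum_(i <- r | Pr i) h i w).
Proof.
move=> hi; have := integrable_sum measurableT r hi.
by apply: eq_integrable => // w _ /=; rewrite sumEFin.
Qed.

Lemma Rintegral_sum (I : Type) (r : seq I) (Pr : pred I) (h : I -> T -> R) :
  (forall i, Pr i -> Pintegrable (h i)) ->
  Rint (fun w => \sum_(i <- r | Pr i) h i w) = \sum_(i <- r | Pr i) Rint (h i).
Proof.
move=> hi; elim: r => [|i r IH].
  by under eq_Rintegral do rewrite big_nil; rewrite big_nil Rintegral_cstP.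
under eq_Rintegral do rewrite big_cons; rewrite big_cons -IH.
case: ifP => Pri //.
by rewrite RintegralD //; [exact: hi | exact: Pintegrable_sum].
Qed.

Lemma Rintegral_lincomb (I : Type) (r : seq I) (Pr : pred I) (a : I -> R)
    (h : I -> T -> R) : (forall i, Pr i -> Pintegrable (h i)) ->
  Rint (fun w => \sum_(i <- r | Pr i) a i * h i w) =
  \sum_(i <- r | Pr i) a i * Rint (h i).
Proof.
move=> hi; rewrite Rintegral_sum => [|i Pi]; last exact/PintegrableZ/hi.
by apply: eq_bigr => i Pi; rewrite RintegralZl //; exact: hi.
Qed.

Lemma Pintegrable_ae_le (h g : T -> R) : measurable_fun setT h -> Pintegrable g ->
  {ae P, forall w, `|h w| <= `|g w|} -> Pintegrable h.
Proof.
move=> mh /integrableP [mg ig] hle; apply/integrableP; split.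
  exact/measurable_EFinP.
apply: le_lt_trans ig; apply: ae_ge0_le_integral => //.
- by apply: measurableT_comp => //; exact/measurable_EFinP.
- exact: measurableT_comp.
- by apply: filterS hle => w hw _ /=; rewrite lee_fin.
Qed.

Lemma bounded_meas_integrable (h : T -> R) : bounded_meas h -> Pintegrable h.
Proof.
case=> mh [M hM]; apply: (Pintegrable_ae_le (g := fun _ => M)) => //.
  exact: Pintegrable_cst.
by apply: filterS hM => w hw; exact: le_trans hw (ler_norm _).
Qed.

Lemma bounded_meas_cst (c : R) : bounded_meas (fun _ => c).
Proof. by split; [exact: measurable_cst | exists `|c|; apply: aeW]. Qed.

Lemma bounded_measD (f g : T -> R) :
  bounded_meas f -> bounded_meas g -> bounded_meas (fun w => f w + g w).
Proof.
move=> [mf [M1 b1]] [mg [M2 b2]]; split; first exact: measurable_funD.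
exists (M1 + M2); apply: filterS2 b1 b2 => w f1 g2.
exact: le_trans (ler_normD _ _) (lerD f1 g2).
Qed.

Lemma bounded_measB (f g : T -> R) :
  bounded_meas f -> bounded_meas g -> bounded_meas (fun w => f w - g w).
Proof.
move=> [mf [M1 b1]] [mg [M2 b2]]; split; first exact: measurable_funB.
exists (M1 + M2); apply: filterS2 b1 b2 => w f1 g2.
exact: le_trans (ler_normB _ _) (lerD f1 g2).
Qed.

Lemma bounded_measM (f g : T -> R) :
  bounded_meas f -> bounded_meas g -> bounded_meas (fun w => f w * g w).
Proof.
move=> [mf [M1 b1]] [mg [M2 b2]]; split; first exact: measurable_funM.
by exists (M1 * M2); apply: filterS2 b1 b2 => w f1 g2; rewrite normrM ler_pM.
Qed.

Lemma bounded_meas_sum (I : Type) (r : seq I) (Pr : pred I) (h : I -> T -> R) :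
  (forall i, Pr i -> bounded_meas (h i)) ->
  bounded_meas (fun w => \sum_(i <- r | Pr i) h i w).
Proof.
move=> hh; rewrite -fct_sumE; apply: big_ind => //.
  exact: bounded_meas_cst.
exact: bounded_measD.
Qed.

Lemma bounded_meas_prod (I : Type) (r : seq I) (Pr : pred I) (h : I -> T -> R) :
  (forall i, Pr i -> bounded_meas (h i)) ->
  bounded_meas (fun w => \prod_(i <- r | Pr i) h i w).
Proof.
move=> hh; rewrite -fct_prodE; apply: big_ind => //.
  exact: bounded_meas_cst.
exact: bounded_measM.
Qed.

Lemma Rintegral_ae_ge0 (h : T -> R) : Pintegrable h -> {ae P, forall w, 0 <= h w} ->
  0 <= Rint h.
Proof.
move=> /integrableP [mh _] h_ge0; rewrite /Rintegral.
rewrite (ae_eq_integral (fun w => (`|h w|)%:E)) //.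
- by apply: fine_ge0; apply: integral_ge0 => w _; rewrite lee_fin.
- exact/measurable_EFinP/measurableT_comp/measurable_EFinP.
- by apply: filterS h_ge0 => w hw _ /=; rewrite ger0_norm.
Qed.

Lemma Rintegral_ae_le (f g : T -> R) : Pintegrable f -> Pintegrable g ->
  {ae P, forall w, f w <= g w} -> Rint f <= Rint g.
Proof.
move=> hf hg hle; rewrite -subr_ge0 -RintegralB //.
apply: Rintegral_ae_ge0; last by apply: filterS hle => w; rewrite subr_ge0.
have := PintegrableD hg (PintegrableZ (-1) hf).
by apply: eq_integrable => // w _ /=; rewrite mulN1r.
Qed.

Lemma sqr_Rintegral_le (Z : T -> R) :
  Pintegrable Z -> Pintegrable (fun w => Z w ^+ 2) ->
  Rint Z ^+ 2 <= Rint (fun w => Z w ^+ 2).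
Proof.
move=> iZ iZ2; set m := Rint Z.
have : 0 <= Rint (fun w => (Z w - m) ^+ 2).
  by apply: Rintegral_ge0 => w _; exact: sqr_ge0.
have -> : Rint (fun w => (Z w - m) ^+ 2) =
          Rint (fun w => Z w ^+ 2 + (- (2 * m)) * Z w + m ^+ 2).
  by apply: eq_Rintegral => w _; ring.
have iZm := PintegrableZ (- (2 * m)) iZ.
rewrite RintegralD ?RintegralD ?RintegralZl ?Rintegral_cstP -/m //;
  [nra | exact: Pintegrable_cst | exact: PintegrableD | exact: Pintegrable_cst].
Qed.

End ProbabilityIntegrals.

Section KappaMoments.
Variables (d : measure_display) (T : measurableType d) (R : realType)
  (P : probability T R) (N : nat) (X : 'I_N -> T -> R) (x : T -> R).
Notation Rint f := (Rintegral P setT f).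

Lemma kappa_fuel_stable n m (A : {set 'I_N}) : (#|A| <= n)%N -> (#|A| <= m)%N ->
  kappa_fuel P X x n A = kappa_fuel P X x m A.
Proof.
elim: n m A => [|n IH] [|m] A //= An Am.
- by rewrite big1 ?subr0 // => B /proper_card; rewrite leqn0 in An; rewrite (eqP An).
- by rewrite big1 ?subr0 // => B /proper_card; rewrite leqn0 in Am; rewrite (eqP Am).
- congr (_ - _); apply: eq_bigr => B /proper_card ltBA; congr (_ * _).
  by apply: IH; rewrite -ltnS; exact: leq_trans ltBA _.
Qed.

Lemma kappaE (A : {set 'I_N}) : kappa P X x A =
  Rint (fun w => x w * Xpow X A w) -
  \sum_(B : {set 'I_N} | B \proper A) kappa P X x B * Rint (Xpow X (A :\: B)).
Proof.
rewrite /kappa; case cardA: #|A| => [|n] /=.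
  by rewrite big1 ?subr0 // => B /proper_card; rewrite cardA.
congr (_ - _); apply: eq_bigr => B /proper_card; rewrite cardA ltnS => leBn.
by congr (_ * _); exact: kappa_fuel_stable.
Qed.

Lemma kappa_moment (A : {set 'I_N}) :
  Rint (fun w => x w * Xpow X A w) =
  \sum_(B : {set 'I_N} | B \subset A) kappa P X x B * Rint (Xpow X (A :\: B)).
Proof.
rewrite (bigD1 A) //= finset.setDv.
have -> : Rint (Xpow X finset.set0) = 1.
  by under eq_Rintegral do rewrite /Xpow big_set0; exact: Rintegral_cstP.
rewrite mulr1 (eq_bigl (fun B : {set 'I_N} => B \proper A)); last first.
  by move=> B; rewrite finset.properEneq andbC.
by rewrite kappaE subrK.
Qed.

End KappaMoments.

Section PointwiseBound.
Variables (R : realType) (N : nat) (tau0 tau1 : R) (v : 'I_N -> R).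

Lemma bern_var_lb (J : {set 'I_N}) : 0 < tau0 -> tau1 < 1 ->
  (forall i, tau0 <= v i <= tau1) ->
  (tau0 * (1 - tau1)) ^+ #|J| <= \prod_(i in J) (v i * (1 - v i)).
Proof.
move=> tau0_gt0 tau1_lt1 v_range; rewrite -prodr_const; apply: ler_prod => i _.
have /andP [lo hi] := v_range i; apply/andP; split; nra.
Qed.

Lemma pointwise_bound (k c : {set 'I_N} -> R) (D : nat) :
  0 < tau0 -> tau1 < 1 -> (forall i, tau0 <= v i <= tau1) ->
  (forall A : {set 'I_N}, (D < #|A|)%N -> c A = 0) ->
  (\sum_(B : {set 'I_N}) k B * recentred c B v) ^+ 2 <=
  (\sum_(B : {set 'I_N} | (#|B| <= D)%N) k B ^+ 2 / (tau0 * (1 - tau1)) ^+ #|B|) *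
  \sum_(J : {set 'I_N}) recentred c J v ^+ 2 * \prod_(i in J) (v i * (1 - v i)).
Proof.
move=> tau0_gt0 tau1_lt1 v_range c_deg; set lam := tau0 * (1 - tau1).
have lam_gt0 : 0 < lam by rewrite mulr_gt0 // subr_gt0.
have g_deg (B : {set 'I_N}) : (D < #|B|)%N -> recentred c B v = 0.
  move=> ltDB; rewrite /recentred big1 // => A sBA.
  by rewrite c_deg ?mul0r //; exact: leq_trans ltDB (subset_leq_card sBA).
rewrite (bigID (fun B : {set 'I_N} => (#|B| <= D)%N)) /= [X in _ + X]big1; last first.
  by move=> B; rewrite -ltnNge => /g_deg ->; rewrite mulr0.
have := @weighted_cauchy_schwarz R _ (fun B : {set 'I_N} => (#|B| <= D)%N) k
  (recentred c ^~ v) (fun B => lam ^+ #|B|).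
rewrite addr0 => /(_ (fun B _ => exprn_gt0 _ lam_gt0)) /le_trans; apply.
apply: ler_wpM2l.
  by apply: sumr_ge0 => B _; rewrite divr_ge0 ?sqr_ge0 // exprn_ge0 // ltW.
rewrite [X in _ <= X](bigID (fun B : {set 'I_N} => (#|B| <= D)%N)) /=.
apply: ler_wpDr.
  apply: sumr_ge0 => B _; rewrite mulr_ge0 ?sqr_ge0 // prodr_ge0 // => i _.
  by have /andP [lo hi] := v_range i; rewrite mulr_ge0 ?subr_ge0 //; lra.
apply: ler_sum => B _; rewrite mulrC; apply: ler_wpM2l; first exact: sqr_ge0.
exact: bern_var_lb.
Qed.

End PointwiseBound.

Section LowDegreeBound.
Variables (d : measure_display) (T : measurableType d) (R : realType)
  (P : probability T R) (N : nat) (X : 'I_N -> T -> R) (x : T -> R)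
  (tau0 tau1 : R).
Hypotheses (tau0_gt0 : 0 < tau0) (tau1_lt1 : tau1 < 1)
  (mX : forall i, measurable_fun setT (X i))
  (X_range : {ae P, forall w, forall i, tau0 <= X i w <= tau1})
  (mx : measurable_fun setT x)
  (x_sqr_int : P.-integrable setT (fun w => ((x w) ^+ 2)%:E)).
Notation Rint f := (Rintegral P setT f).
Notation Xat w := (fun i => X i w).

Lemma bounded_meas_X i : bounded_meas P (X i).
Proof.
split; first exact: mX.
exists tau1; apply: filterS X_range => w /(_ i) /andP [lo hi].
by rewrite ger0_norm // (le_trans (ltW tau0_gt0) lo).
Qed.

Lemma bounded_meas_Xpow (A : {set 'I_N}) : bounded_meas P (Xpow X A).
Proof. by apply: bounded_meas_prod => i _; exact: bounded_meas_X. Qed.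

Lemma bounded_meas_recentred (c : {set 'I_N} -> R) J :
  bounded_meas P (fun w => recentred c J (Xat w)).
Proof.
apply: bounded_meas_sum => A _.
by apply: bounded_measM; [exact: bounded_meas_cst | exact: bounded_meas_Xpow].
Qed.

(* x is square integrable, hence integrable on a probability space, and so is
   x X^A since |X^A| <= 1 a.e. *)
Lemma Pintegrable_x : Pintegrable P x.
Proof.
apply: (Pintegrable_ae_le (g := fun w => 1 + x w ^+ 2)) => //.
  apply: PintegrableD; [exact: Pintegrable_cst | exact: x_sqr_int].
apply: aeW => w; rewrite [leRHS]ger0_norm ?addr_ge0 ?sqr_ge0 //.
rewrite -[x w ^+ 2]ger0_norm ?sqr_ge0 // normrX.
have := sqr_ge0 (`|x w| - 1); nra.
Qed.

Lemma Pintegrable_xXpow (A : {set 'I_N}) :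
  Pintegrable P (fun w => x w * Xpow X A w).
Proof.
apply: (Pintegrable_ae_le (g := x)); last 2 first.
- exact: Pintegrable_x.
- apply: filterS X_range => w Xw; rewrite normrM ler_piMr // /Xpow normr_prod.
  apply: prodr_ile1 => i _; have /andP [lo hi] := Xw i.
  rewrite normr_ge0 ger0_norm ?(le_trans (ltW tau0_gt0) lo) //=.
  exact: le_trans hi (ltW tau1_lt1).
by apply: measurable_funM => //; case: (bounded_meas_Xpow A).
Qed.

Lemma cross_moment (c : {set 'I_N} -> R) :
  jointE P X (fun w y => (\sum_(A : {set 'I_N}) c A * mono A y) * x w) =
  Rint (fun w => \sum_(B : {set 'I_N}) kappa P X x B * recentred c B (Xat w)).
Proof.
have iXpow A := bounded_meas_integrable (bounded_meas_Xpow A).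
have ig B := bounded_meas_integrable (bounded_meas_recentred c B).
transitivity (\sum_(A : {set 'I_N}) c A * Rint (fun w => x w * Xpow X A w)).
  rewrite -Rintegral_lincomb => [|A _]; last exact: Pintegrable_xXpow.
  apply: eq_Rintegral => w _; transitivity (x w * \sum_(y : {ffun 'I_N -> bool})
      bern_weight (Xat w) y * \sum_(A : {set 'I_N}) c A * mono A y).
    by rewrite mulr_sumr; apply: eq_bigr => y _; ring.
  by rewrite cond_multilin mulr_sumr; apply: eq_bigr => A _; rewrite /Xpow /vpow; ring.
under eq_bigr do rewrite kappa_moment mulr_sumr.
rewrite Rintegral_lincomb => [|B _]; last exact: ig.
rewrite (exchange_big_dep xpredT) //=; apply: eq_bigr => B _.
rewrite (Rintegral_lincomb _ _ (h := fun A => Xpow X (A :\: B))) => [|A _];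
  last exact: iXpow.
by rewrite mulr_sumr; apply: eq_bigr => A _; ring.
Qed.

Lemma second_moment (c : {set 'I_N} -> R) :
  jointE P X (fun _ y => (\sum_(A : {set 'I_N}) c A * mono A y) ^+ 2) =
  Rint (fun w => \sum_(J : {set 'I_N})
          recentred c J (Xat w) ^+ 2 * \prod_(i in J) (X i w * (1 - X i w))).
Proof.
apply: eq_Rintegral => w _; rewrite -cond_multilin2.
by apply: eq_bigr => y _; rewrite mulrC.
Qed.

Lemma low_degree_bound (c : {set 'I_N} -> R) (D : nat) :
  (forall A : {set 'I_N}, (D < #|A|)%N -> c A = 0) ->
  jointE P X (fun w y => (\sum_(A : {set 'I_N}) c A * mono A y) * x w) ^+ 2 <=
  (\sum_(A : {set 'I_N} | (#|A| <= D)%N)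
       kappa P X x A ^+ 2 / (tau0 * (1 - tau1)) ^+ #|A|) *
  jointE P X (fun _ y => (\sum_(A : {set 'I_N}) c A * mono A y) ^+ 2).
Proof.
move=> c_deg; rewrite cross_moment second_moment.
set Z := (F in Rintegral _ _ F ^+ 2 <= _); set H := (F in _ <= _ * Rintegral _ _ F).
have bZ : bounded_meas P Z.
  apply: bounded_meas_sum => B _.
  by apply: bounded_measM; [exact: bounded_meas_cst | exact: bounded_meas_recentred].
have bH : bounded_meas P H.
  apply: bounded_meas_sum => J _; apply: bounded_measM.
    by apply: bounded_measM; exact: bounded_meas_recentred.
  apply: bounded_meas_prod => i _; apply: bounded_measM; first exact: bounded_meas_X.
  by apply: bounded_measB; [exact: bounded_meas_cst | exact: bounded_meas_X].
have bZ2 : bounded_meas P (fun w => Z w ^+ 2) by exact: bounded_measM.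
apply: le_trans (sqr_Rintegral_le (bounded_meas_integrable bZ)
  (bounded_meas_integrable bZ2)) _.
rewrite -RintegralZl //; last exact: bounded_meas_integrable.
apply: Rintegral_ae_le; [exact: bounded_meas_integrable |
  exact/PintegrableZ/bounded_meas_integrable |].
by apply: filterS X_range => w Xw; exact: pointwise_bound.
Qed.

End LowDegreeBound.

Lemma ratio_sqr_le (R : rcfType) (S E Q : R) : 0 <= S ->
  E ^+ 2 <= S * Q -> (E / Num.sqrt Q) ^+ 2 <= S.
Proof.
move=> S_ge0 ESQ; have [Q_gt0|Q_le0] := boolP (0 < Q).
  by rewrite exprMn exprVn sqr_sqrtr ?(ltW Q_gt0) // ler_pdivrMr.
have -> : Num.sqrt Q = 0 by apply/eqP; rewrite sqrtr_eq0 leNgt.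
by rewrite invr0 mulr0 expr0n.
Qed.

Lemma sup_sqr_le (R : realType) (E : set R) (S : R) : 0 <= S ->
  (forall r, E r -> r ^+ 2 <= S) -> sup E ^+ 2 <= S.
Proof.
move=> S_ge0 ES; have [[r0 Er0]|/forallNP E0] := pselect (exists r, E r); last first.
  by rewrite (_ : E = set0) ?sup0 ?expr0n //; apply/seteqP; split => r // /E0.
have abs_le r : E r -> `|r| <= Num.sqrt S.
  by move=> Er; rewrite -sqrtr_sqr ler_sqrt // ES.
have ubE : ubound E (Num.sqrt S).
  by move=> r /abs_le; exact: le_trans (ler_norm r).
have sup_le : sup E <= Num.sqrt S by apply: ge_sup => //; exists r0.
have le_sup : r0 <= sup E by apply: ub_le_sup => //; exists (Num.sqrt S).
have r0_ge : - Num.sqrt S <= r0 by rewrite lerNl; have /ler_normlP[] := abs_le r0 Er0.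
rewrite -(sqr_sqrtr S_ge0); have := sqrtr_ge0 S; nra.
Qed.

(* The main theorem. *)
Theorem mainTheorem3 (d : measure_display) (T : measurableType d) (R : realType)
    (P : probability T R) (N : nat) (X : 'I_N -> T -> R) (x : T -> R)
    (tau0 tau1 : R) (D : nat) :
  0 < tau0 -> tau0 <= tau1 -> tau1 < 1 ->
  (forall i, measurable_fun setT (X i)) ->
  {ae P, forall w, forall i, tau0 <= X i w <= tau1} ->
  (exists g : ('I_N -> R) -> R, x = (fun w => g (fun i => X i w))) ->
  measurable_fun setT x ->
  P.-integrable setT (fun w => ((x w) ^+ 2)%:E) ->
  Corr_le P X x D ^+ 2 <=
    \sum_(A : {set 'I_N} | (#|A| <= D)%N)
       kappa P X x A ^+ 2 / (tau0 * (1 - tau1)) ^+ #|A|.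
Proof.
move=> tau0_gt0 _ tau1_lt1 mX X_range _ mx x_sqr_int.
have S_ge0 : 0 <= \sum_(A : {set 'I_N} | (#|A| <= D)%N)
                   kappa P X x A ^+ 2 / (tau0 * (1 - tau1)) ^+ #|A|.
  apply: sumr_ge0 => A _; rewrite divr_ge0 ?sqr_ge0 // exprn_ge0 // ltW //.
  by rewrite mulr_gt0 // subr_gt0.
apply: sup_sqr_le => // _ [f [f_deg _ ->]]; apply: ratio_sqr_le => //.
rewrite /jointE; under eq_Rintegral do under eq_bigr do rewrite evalY_multilin.
under [X in _ <= _ * X]eq_Rintegral do under eq_bigr do rewrite evalY_multilin.
by apply: low_degree_bound => // A; exact: multilin_coef_deg.
Qed.
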